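(* Let $S\subseteq[n]$ and let $\alpha=\mathbb I(S)\in\{0,1\}^n$ be the indicator vector of $S$ (its $j$-th entry is $1$ if $j\in S$ and $0$ otherwise). Then for every positive integer $t$, $$t\,\mathcal P(\mathrm{SM}_n(S))=\mathrm{Newton}(\kappa_{t\alpha}).$$
   Context: For $S,T\subseteq[n]$, write $T\le S$ if $|T|=|S|$ and, for each $1\le i\le |T|$, the $i$-th smallest element of $T$ is at most the $i$-th smallest element of $S$. The Schubert matroid $\mathrm{SM}_n(S)$ is the matroid on $[n]$ whose bases are $\{T\subseteq[n]: T\le S\}$. For a matroid $M$ on $[n]$ with set of bases $\mathcal B$, $\mathcal P(M)=\mathrm{conv}\{e_B: B\in\mathcal B\}\subset\mathbb R^n$ with $e_B=\sum_{b\in B}e_b$; $t\mathcal P=\{t x: x\in\mathcal P\}$. Key polynomials $\kappa_\alpha(x)\in\mathbb Z[x_1,\dots,x_n]$ for $\alpha\in\mathbb Z_{\ge0}^n$ are defined recursively: if $\alpha_1\ge\alpha_2\ge\dots\ge\alpha_n$ then $\kappa_\alpha=x_1^{\alpha_1}\cdots x_n^{\alpha_n}$; otherwise pick $i$ with $\alpha_i<\alpha_{i+1}$, let $\alpha'$ be $\alpha$ with entries $i,i+1$ swapped, and set $\kappa_\alpha=\partial_i(x_i\kappa_{\alpha'})$, where $\partial_i f=(f-s_if)/(x_i-x_{i+1})$ and $s_if$ swaps $x_i$ and $x_{i+1}$ (this is independent of the choice of $i$). For a polynomial $f=\sum_\beta c_\beta x^\beta$, $\mathrm{Newton}(f)=\mathrm{conv}\{\beta: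 c_\beta\neq0\}$. *)

From HB Require Import structures.
From mathcomp Require Import all_boot all_order all_algebra all_fingroup.
From mathcomp Require Import mpoly.
From Stdlib Require Import ClassicalEpsilon.

Set Implicit Arguments.
Unset Strict Implicit.
Unset Printing Implicit Defensive.

Import Order.TTheory GRing.Theory Num.Theory.
Local Open Scope ring_scope.

(* Convention: the ground set [n] = {1,...,n} is represented by 'I_n = {0,...,n-1}. *)

Definition sorted_elems (n : nat) (T : {set 'I_n}) : seq nat :=
  sort leq [seq val i | i <- enum T].

Definition gale_le (n : nat) (T S : {set 'I_n}) : bool :=
  (#|T| == #|S|) &&
  all (fun k => nth 0%N (sorted_elems T) k <= nth 0%N (sorted_elems S) k)%N
      (iota 0 #|T|).

Definition schubert_bases (n : nat) (S : {set 'I_n}) : {set {set 'I_n}} :=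
  [set T : {set 'I_n} | gale_le T S].

Definition conv (R : realFieldType) (n : nat) (A : seq 'rV[R]_n) (x : 'rV[R]_n) : Prop :=
  exists w : 'I_(size A) -> R,
    (forall k, 0 <= w k) /\ \sum_k w k = 1 /\
    x = \sum_k w k *: nth 0 A k.

Definition indic_vec (R : realFieldType) (n : nat) (B : {set 'I_n}) : 'rV[R]_n :=
  \row_j (j \in B)%:R.

Definition matroid_polytope (R : realFieldType) (n : nat) (bases : {set {set 'I_n}})
  : 'rV[R]_n -> Prop :=
  conv [seq indic_vec R B | B <- enum bases].

Definition dilate (R : realFieldType) (n : nat) (t : R) (P : 'rV[R]_n -> Prop)
  : 'rV[R]_n -> Prop :=
  fun x => exists2 y, P y & x = t *: y.

Definition mnm_swap (n : nat) (i j : 'I_n) (a : 'X_{1..n}) : 'X_{1..n} :=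
  [multinom a (tperm i j k) | k < n].

(* divided difference  (f - s f) / (x_i - x_j),  s swapping x_i and x_j
   (used with j = i+1); defined as the (unique) quotient *)
Definition ddiff (n : nat) (i j : 'I_n) (f : {mpoly int[n]}) : {mpoly int[n]} :=
  epsilon (inhabits 0)
    (fun g : {mpoly int[n]} => g * ('X_i - 'X_j) = f - msym (tperm i j) f).

Definition ascent (n : nat) (a : 'X_{1..n}) (ij : 'I_n * 'I_n) : bool :=
  (val ij.2 == (val ij.1).+1) && (a ij.1 < a ij.2)%N.

(* recursive definition with fuel; a is a partition (weakly decreasing)
   iff it has no ascent, in which case kappa_a = x^a *)
Fixpoint key_rec (n : nat) (fuel : nat) (a : 'X_{1..n}) : {mpoly int[n]} :=
  match fuel with
  | 0 => 'X_[a]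
  | k.+1 =>
    match [pick ij | ascent a ij] with
    | None => 'X_[a]
    | Some ij => ddiff ij.1 ij.2 ('X_ij.1 * key_rec k (mnm_swap ij.1 ij.2 a))
    end
  end.

(* n*n exceeds the number of inversions, so the fuel never runs out *)
Definition key_poly (n : nat) (a : 'X_{1..n}) : {mpoly int[n]} := key_rec (n * n) a.

Definition newton (R : realFieldType) (n : nat) (f : {mpoly int[n]}) : 'rV[R]_n -> Prop :=
  conv (map (fun m : 'X_{1..n} => \row_j ((m j)%:R : R)) (msupp f)).

Definition scaled_indicator (n : nat) (t : nat) (S : {set 'I_n}) : 'X_{1..n} :=
  [multinom (t * (i \in S))%N | i < n].

(* Write alpha = t 1_S.  Every recursive step of the definition of kappa_alpha
   is kappa = d_i (x_i kappa') where i notin S, i+1 in S and kappa' is the key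
   polynomial for the swapped set s_i S, which is Gale-below S.  On each segment
   x_i + x_{i+1} = s the coefficients of d_i (x_i f) are explicit signed sums of
   those of f; from this one shows by induction that
   - every exponent of kappa_alpha is a sum of t indicator vectors of bases
     of SM_n(S) (a mass transfer between i and i+1 is realised by swapping
     i and i+1 in some of the bases), and
   - every vertex t e_T, T a basis, is an exponent (only one term survives).
   The recursion ends at a down-closed S, where kappa_alpha = x^alpha and S is
   the only set Gale-below S.  The first property gives Newton(kappa_alpha)
   in t P(SM_n(S)), the second the converse. *)

From HB Require Import structures.
From mathcomp Require Import all_boot all_order all_algebra all_fingroup.
From mathcomp Require Import mpoly zify ring.
From Stdlib Require Import ClassicalEpsilon.

Set Implicit Arguments.
Unset Strict Implicit.
Unset Printing Implicit Defensive.

Import GRing.Theory Num.Theory.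

Section TailCounts.
Variable n : nat.
Implicit Types (S T : {set 'I_n}) (k : nat).

Definition tail_card T k : nat := #|[set x in T | k <= x]|.

(* The Gale order, read off the number of elements in each tail [k, n). *)
Definition tails_le T S : Prop :=
  tail_card T 0 = tail_card S 0 /\ forall k, tail_card T k <= tail_card S k.

Definition swap_set (i j : 'I_n) T : {set 'I_n} := [set x | tperm i j x \in T].

Lemma tail_card0 T : tail_card T 0 = #|T|.
Proof. by apply: eq_card => x; rewrite !inE andbT. Qed.

Lemma tail_cardS T (x : 'I_n) : tail_card T x = (x \in T) + tail_card T x.+1.
Proof.
rewrite /tail_card (cardsD1 x) !inE leqnn andbT; congr (_ + _).
apply: eq_card => y; rewrite !inE ltn_neqAle; case: (y =P x) => [->|/eqP ne] /=.
  by rewrite !eqxx /= ?andbF.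
by rewrite eq_sym ne.
Qed.

Lemma swap_setE (i j : 'I_n) T x : (x \in swap_set i j T) = (tperm i j x \in T).
Proof. by rewrite inE. Qed.

Section AdjacentSwap.
Variables i j : 'I_n.
Hypothesis succ_ij : (j : nat) = i.+1.

Lemma tail_card_swap_neq T k : k <> j -> tail_card (swap_set i j T) k = tail_card T k.
Proof.
move=> kj; rewrite /tail_card -(card_preimset _ (@perm_inj _ (tperm i j))).
apply: eq_card => x; rewrite !inE tpermK; congr (_ && _).
by case: tpermP => [->|->|//]; apply/idP/idP; lia.
Qed.

Lemma tail_card_swap_j T :
  tail_card (swap_set i j T) j + (j \in T) = tail_card T j + (i \in T).
Proof.
rewrite !tail_cardS tail_card_swap_neq; last by lia.
rewrite swap_setE tpermR.
by move: (i \in T) (j \in T) (tail_card T j.+1) => a b c; lia.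
Qed.

Lemma tail_card_i T : tail_card T i = (i \in T) + tail_card T j.
Proof. by rewrite tail_cardS succ_ij. Qed.

Variable S : {set 'I_n}.
Hypotheses (notin_iS : i \notin S) (in_jS : j \in S).

Let j_neq0 : 0 <> (j : nat). Proof. by lia. Qed.

Lemma tails_le_trans_swap T : tails_le T (swap_set i j S) -> tails_le T S.
Proof.
move=> [h0 hk]; split; first by rewrite h0 tail_card_swap_neq.
move=> k; case: (k =P (j : nat)) => [->|kj]; last by rewrite -(tail_card_swap_neq S kj).
have := tail_card_swap_j S; rewrite in_jS (negbTE notin_iS) => e.
by apply: leq_trans (hk _) _; lia.
Qed.

Lemma tails_le_swap_l T :
  tails_le T (swap_set i j S) -> (i \in T) != (j \in T) -> tails_le (swap_set i j T) S.
Proof.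
move=> [h0 hk] hne; split; first by rewrite tail_card_swap_neq // h0 tail_card_swap_neq.
move=> k; case: (k =P (j : nat)) => [->|kj].
  have := tail_card_swap_j S; rewrite in_jS (negbTE notin_iS) => e.
  have := tail_card_swap_j T => e2; have := hk j.
  by move: hne e2; case: (i \in T); case: (j \in T) => //=; lia.
by rewrite !tail_card_swap_neq // -(tail_card_swap_neq S kj).
Qed.

Lemma tails_le_swap_r T :
  tails_le T S -> ~~ ((i \notin T) && (j \in T)) -> tails_le T (swap_set i j S).
Proof.
move=> [h0 hk] hne; split; first by rewrite tail_card_swap_neq.
move=> k; case: (k =P (j : nat)) => [->|kj]; last by rewrite tail_card_swap_neq.
have := tail_card_swap_j S; rewrite in_jS (negbTE notin_iS) => e.
have := tail_card_i T; have := tail_card_i S; rewrite (negbTE notin_iS) => eS eT.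
have := hk i; have := hk j.+1.
have := tail_cardS T j; have := tail_cardS S j; rewrite in_jS => e1 e2.
by move: hne eT e2; case: (i \in T); case: (j \in T) => //=; lia.
Qed.

Lemma tails_le_swap2 T :
  tails_le T S -> i \notin T -> j \in T -> tails_le (swap_set i j T) (swap_set i j S).
Proof.
move=> [h0 hk] hiT hjT; split; first by rewrite !tail_card_swap_neq.
move=> k; case: (k =P (j : nat)) => [->|kj]; last by rewrite !tail_card_swap_neq.
have := tail_card_swap_j S; rewrite in_jS (negbTE notin_iS) => e.
have := tail_card_swap_j T; rewrite hjT (negbTE hiT) => e2.
by have := hk j; lia.
Qed.

End AdjacentSwap.

Definition down_closed S : Prop := forall x y : 'I_n, x \in S -> y <= x -> y \in S.

Lemma tails_le_down_closed S T : down_closed S -> tails_le T S -> T = S.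
Proof.
move=> hS [h0 hk].
have sub : T \subset S.
  apply/subsetP => x xT; apply/negPn/negP => xS.
  have : tail_card S x = 0.
    apply/eqP; rewrite cards_eq0; apply/eqP/setP => y; rewrite !inE.
    by apply/negP => /andP [yS xy]; rewrite (hS _ _ yS xy) in xS.
  by have := hk x; rewrite tail_cardS xT; lia.
by apply/eqP; rewrite eqEcard sub /= -!tail_card0 h0.
Qed.

End TailCounts.

Lemma count_leq_le_pointwise k (s1 s2 : seq nat) : size s1 = size s2 ->
  (forall i, i < size s1 -> nth 0 s1 i <= nth 0 s2 i) ->
  count (leq k) s1 <= count (leq k) s2.
Proof.
elim: s1 s2 => [|a s1 IH] [|b s2] //= [hs] h.
have hab := h 0 erefl; have hc := IH s2 hs (fun i hi => h i.+1 hi).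
by apply: leq_add => //; case: (leqP k a) => //= ka; rewrite (leq_trans ka hab).
Qed.

Lemma sorted_count_leq_nth_ge k (s : seq nat) i : sorted leq s -> i < size s ->
  k <= nth 0 s i -> size s - i <= count (leq k) s.
Proof.
move=> hs hi hk.
rewrite -(cat_take_drop i s) count_cat -size_drop.
have -> : count (leq k) (drop i s) = size (drop i s).
  apply/eqP; rewrite -all_count; apply/(all_nthP 0) => p hp.
  rewrite nth_drop; apply: leq_trans hk _.
  rewrite size_drop in hp.
  by apply: (sorted_leq_nth leq_trans leqnn 0 hs); rewrite ?inE; lia.
by rewrite cat_take_drop; lia.
Qed.

Lemma sorted_count_leq_nth_lt k (s : seq nat) i : sorted leq s -> i < size s ->
  nth 0 s i < k -> count (leq k) s <= size s - i.+1.
Proof.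
move=> hs hi hk.
rewrite -(cat_take_drop i.+1 s) count_cat.
have -> : count (leq k) (take i.+1 s) = 0.
  apply/eqP; rewrite -leqn0 leqNgt -has_count; apply/hasPn => x /(nthP 0) [p hp <-].
  rewrite size_take in hp.
  rewrite nth_take; last by move: hp; case: ifP; lia.
  rewrite -ltnNge; apply: leq_ltn_trans hk.
  by apply: (sorted_leq_nth leq_trans leqnn 0 hs); rewrite ?inE; move: hp; case: ifP; lia.
by have := count_size (leq k) (drop i.+1 s); rewrite size_drop cat_take_drop; lia.
Qed.

Section GaleOrder.
Variable n : nat.
Implicit Types (S T : {set 'I_n}).

Lemma count_sorted_elems T k : count (leq k) (sorted_elems T) = tail_card T k.
Proof.
have hp : perm_eq (sorted_elems T) [seq val i | i <- enum T] by rewrite perm_sort.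
rewrite (seq.permP hp) count_map /tail_card cardE.
rewrite /enum_mem size_filter -enumT /= count_filter.
by apply: eq_count => x; rewrite !inE andbC.
Qed.

Lemma size_sorted_elems T : size (sorted_elems T) = #|T|.
Proof. by rewrite /sorted_elems size_sort size_map cardE. Qed.

Lemma sorted_elems_sorted T : sorted leq (sorted_elems T).
Proof. exact: (sort_sorted leq_total). Qed.

Lemma gale_le_tails T S : gale_le T S <-> tails_le T S.
Proof.
rewrite /gale_le /tails_le !tail_card0; split.
  case/andP => /eqP hc /allP ha; split=> // k; rewrite -!count_sorted_elems.
  apply: count_leq_le_pointwise; first by rewrite !size_sorted_elems.
  by move=> i; rewrite size_sorted_elems => hi; apply: ha; rewrite mem_iota.
move=> [h0 hk]; rewrite h0 eqxx /=.
apply/allP => i; rewrite mem_iota add0n => /andP [_ hi].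
rewrite leqNgt; apply/negP => hlt; set k := nth 0 (sorted_elems T) i.
have := sorted_count_leq_nth_ge (sorted_elems_sorted T) (k := k) (i := i).
rewrite size_sorted_elems h0 => /(_ hi (leqnn _)) h2.
have := sorted_count_leq_nth_lt (sorted_elems_sorted S) (k := k) (i := i).
rewrite size_sorted_elems => /(_ hi hlt) h3.
have := hk k; rewrite -!count_sorted_elems => h4.
by have := leq_trans h2 (leq_trans h4 h3); rewrite -(subnSK hi) ltnn.
Qed.

End GaleOrder.

Section DividedDifference.
Variable n : nat.
Variables i j : 'I_n.
Hypothesis neq_ij : i != j.
Local Open Scope ring_scope.

Let neq_ji : j != i. Proof. by rewrite eq_sym. Qed.

Definition mnm_set2 (m : 'X_{1..n}) (a b : nat) : 'X_{1..n} :=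
  [multinom (if k == i then a else if k == j then b else m k) | k < n].

Lemma mnm_set2E m a b k :
  mnm_set2 m a b k = if k == i then a else if k == j then b else m k.
Proof. by rewrite mnmE. Qed.

Lemma mnm_set2_i m a b : mnm_set2 m a b i = a.
Proof. by rewrite mnm_set2E eqxx. Qed.

Lemma mnm_set2_j m a b : mnm_set2 m a b j = b.
Proof. by rewrite mnm_set2E (negbTE neq_ji) eqxx. Qed.

Lemma mnm_set2_id m : mnm_set2 m (m i) (m j) = m.
Proof.
apply/mnmP => k; rewrite mnm_set2E.
by case: (k =P i) => [->|_] //; case: (k =P j) => [->|].
Qed.

Lemma mnm_set2_addi m a b : (U_(i) + mnm_set2 m a b)%MM = mnm_set2 m a.+1 b.
Proof.
apply/mnmP => k; rewrite mnmDE mnm1E !mnm_set2E.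
by case: (k =P i) => [->|/eqP ki]; rewrite ?eqxx // eq_sym (negbTE ki).
Qed.

Lemma mnm_set2_addj m a b : (U_(j) + mnm_set2 m a b)%MM = mnm_set2 m a b.+1.
Proof.
apply/mnmP => k; rewrite mnmDE mnm1E !mnm_set2E.
case: (k =P i) => [->|/eqP ki]; first by rewrite (negbTE neq_ji).
by case: (k =P j) => [->|/eqP kj]; rewrite ?eqxx // eq_sym (negbTE kj).
Qed.

Lemma mnm_set2_tperm m a b :
  [multinom mnm_set2 m a b (tperm i j k) | k < n] = mnm_set2 m b a.
Proof.
apply/mnmP => k; rewrite mnmE !mnm_set2E.
case: tpermP => [->|->|/eqP ki /eqP kj]; rewrite ?eqxx ?(negbTE neq_ij) ?(negbTE neq_ji) //.
by rewrite (negbTE ki) (negbTE kj).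
Qed.

Lemma mpolyX_set2 m a b : 'X_[mnm_set2 m a b] =
  'X_[mnm_set2 m 0 0] * 'X_i ^+ a * 'X_j ^+ b :> {mpoly int[n]}.
Proof.
elim: b => [|b IHb].
  elim: a => [|a IHa]; first by rewrite !expr0 !mulr1.
  by rewrite -mnm_set2_addi mpolyXD IHa !expr0 !mulr1 exprS; ring.
by rewrite -mnm_set2_addj mpolyXD IHb exprS; ring.
Qed.

Definition Xdiff_dvd (p : {mpoly int[n]}) : Prop := exists q, q * ('X_i - 'X_j) = p.

Lemma Xdiff_dvd0 : Xdiff_dvd 0. Proof. by exists 0; rewrite mul0r. Qed.

Lemma Xdiff_dvdD p q : Xdiff_dvd p -> Xdiff_dvd q -> Xdiff_dvd (p + q).
Proof. by move=> [a <-] [b <-]; exists (a + b); rewrite mulrDl. Qed.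

Lemma Xdiff_dvdMl r p : Xdiff_dvd p -> Xdiff_dvd (r * p).
Proof. by move=> [a <-]; exists (r * a); rewrite mulrA. Qed.

Lemma Xdiff_dvdN p : Xdiff_dvd p -> Xdiff_dvd (- p).
Proof. by move=> [a <-]; exists (- a); rewrite mulNr. Qed.

Lemma Xdiff_dvdZ c p : Xdiff_dvd p -> Xdiff_dvd (c *: p).
Proof. by move=> [a <-]; exists (c *: a); rewrite scalerAl. Qed.

Lemma Xdiff_dvd_binomial a b : Xdiff_dvd ('X_i ^+ a * 'X_j ^+ b - 'X_i ^+ b * 'X_j ^+ a).
Proof.
wlog le_ba : a b / (b <= a)%N.
  move=> H; case: (leqP b a) => [|/ltnW] /H // /Xdiff_dvdN; by rewrite opprB.
rewrite -(subnKC le_ba); move: (a - b)%N => d.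
have -> : 'X_i ^+ (b + d) * 'X_j ^+ b - 'X_i ^+ b * 'X_j ^+ (b + d) =
   ('X_i ^+ b * 'X_j ^+ b : {mpoly int[n]}) * ('X_i ^+ d - 'X_j ^+ d).
  by rewrite !exprD; ring.
apply: Xdiff_dvdMl; rewrite subrXX.
by exists (\sum_(k < d) 'X_i ^+ (d.-1 - k) * 'X_j ^+ k); rewrite mulrC.
Qed.

Lemma Xdiff_dvd_monomial m : Xdiff_dvd ('X_[m] - msym (tperm i j) 'X_[m]).
Proof.
rewrite msymX tpermV.
have := mnm_set2_tperm m (m i) (m j); rewrite mnm_set2_id => ->.
rewrite -{1}(mnm_set2_id m) (mpolyX_set2 m (m i)) (mpolyX_set2 m (m j)).
rewrite -!mulrA -mulrBr.
exact/Xdiff_dvdMl/Xdiff_dvd_binomial.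
Qed.

(* f - s f is divisible by x_i - x_j, so [ddiff] picks the actual quotient. *)
Lemma ddiffP (f : {mpoly int[n]}) :
  ddiff i j f * ('X_i - 'X_j) = f - msym (tperm i j) f.
Proof.
apply: (epsilon_spec (inhabits 0)
  (fun g : {mpoly int[n]} => g * ('X_i - 'X_j) = f - msym (tperm i j) f)).
have -> : f - msym (tperm i j) f =
   \sum_(m <- msupp f) f@_m *: ('X_[m] - msym (tperm i j) 'X_[m]).
  rewrite [in LHS](mpolyE f) [msym _ _]raddf_sum -sumrB; apply: eq_bigr => m _.
  by rewrite scalerBr; congr (_ - _); exact: msymZ.
apply: (big_ind Xdiff_dvd); [exact: Xdiff_dvd0 | exact: Xdiff_dvdD |].
by move=> m _; apply/Xdiff_dvdZ/Xdiff_dvd_monomial.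
Qed.

Lemma mcoeffMX_eq0 (p : {mpoly int[n]}) (l : 'I_n) (m : 'X_{1..n}) :
  m l = 0%N -> (p * 'X_l)@_m = 0.
Proof.
move=> h; apply: memN_msupp_eq0.
rewrite (perm_mem (msuppMX p U_(l))); apply/mapP => -[m' _ e].
by move: h; rewrite e mnmDE mnm1E eqxx.
Qed.

Variables f g : {mpoly int[n]}.
Hypothesis g_ddiff : g * ('X_i - 'X_j) = 'X_i * f - msym (tperm i j) ('X_i * f).

Definition segment_coef (h : {mpoly int[n]}) m s p := h@_(mnm_set2 m p (s - p)).

Lemma mcoeff_ddiff_segment m s c : (c <= s)%N ->
  g@_(mnm_set2 m c (s - c)) - (g * 'X_j)@_(mnm_set2 m c.+1 (s - c)) =
  f@_(mnm_set2 m c (s - c)) - (f * 'X_i)@_(mnm_set2 m (s - c) c.+1).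
Proof.
move=> cs; have := congr1 (mcoeff (mnm_set2 m c.+1 (s - c))) g_ddiff.
rewrite mulrBr !mcoeffB mcoeff_sym mnm_set2_tperm -mnm_set2_addi mcoeffMX.
by rewrite [_ * f]mulrC mcoeffMX.
Qed.

Lemma segment_coef_ddiff_top m s : segment_coef g m s s = segment_coef f m s s.
Proof.
have := mcoeff_ddiff_segment m (leqnn s).
by rewrite /segment_coef subnn !mcoeffMX_eq0 ?mnm_set2_j ?mnm_set2_i // !subr0.
Qed.

Lemma segment_coef_ddiff_step m s c : (c < s)%N ->
  segment_coef g m s c - segment_coef g m s c.+1 =
  segment_coef f m s c - segment_coef f m s (s - c.+1).
Proof.
move=> cs; have := mcoeff_ddiff_segment m (ltnW cs); rewrite /segment_coef.
have e : (s - c = (s - c.+1).+1)%N by lia.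
rewrite (_ : mnm_set2 m c.+1 (s - c) = U_(j) + mnm_set2 m c.+1 (s - c.+1))%MM;
  last by rewrite mnm_set2_addj e.
rewrite (_ : mnm_set2 m (s - c) c.+1 = U_(i) + mnm_set2 m (s - c.+1) c.+1)%MM;
  last by rewrite mnm_set2_addi e.
rewrite !mcoeffMX.
by have -> : (s - (s - c.+1) = c.+1)%N by lia.
Qed.

End DividedDifference.

Section Telescoping.
Local Open Scope ring_scope.

Lemma sum_ord_single (V : nmodType) (F : nat -> V) s p0 : (p0 <= s)%N ->
  (forall p, (p <= s)%N -> p <> p0 -> F p = 0) -> \sum_(p < s.+1) F p = F p0.
Proof.
move=> hp0 h; rewrite (bigD1 (Ordinal (hp0 : p0 < s.+1)%N)) //= big1 ?addr0 //.
by move=> p /eqP hp; apply: h; [rewrite -ltnS | move=> e; apply/hp/val_inj].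
Qed.

Lemma sumr_neq0_exists (V : nmodType) (I : finType) (F : I -> V) :
  \sum_i F i != 0 -> exists i, F i != 0.
Proof.
case: (pickP (fun i => F i != 0)) => [i hi _|h]; first by exists i.
by rewrite big1 ?eqxx // => i _; apply/eqP/negbFE/h.
Qed.

(* Solution of the recursion satisfied by the coefficients of a divided
   difference along a segment x_i + x_j = s (see [segment_coef_ddiff_step]). *)
Definition ddiff_weight (s c p : nat) : int := (c <= p)%N%:Z - (p + c < s)%N%:Z.

Lemma ddiff_weight_neq0 s c p : ddiff_weight s c p != 0 ->
  ((c <= p) && (s <= p + c) || (p < c) && (p + c < s))%N.
Proof.
by rewrite /ddiff_weight; case: (leqP c p); case: (ltnP (p + c) s); rewrite ?subrr.
Qed.

Lemma ddiff_weight_max a b : ddiff_weight (a + b) a (maxn a b) = 1.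
Proof.
rewrite /ddiff_weight leq_maxl ltnNge.
by have -> : (a + b <= maxn a b + a)%N by rewrite addnC leq_add2r leq_maxr.
Qed.

Lemma telescope_ddiff_weight (G F : nat -> int) s :
  G s = F s -> (forall c, (c < s)%N -> G c - G c.+1 = F c - F (s - c.+1)%N) ->
  forall c, (c <= s)%N -> G c = \sum_(p < s.+1) ddiff_weight s c p * F p.
Proof.
move=> htop hstep.
have pick k : (k <= s)%N -> F k = \sum_(p < s.+1) (val p == k)%:Z * F p.
  move=> hk; rewrite (@sum_ord_single _ (fun p => (p == k)%:Z * F p) _ _ hk) ?eqxx ?mul1r //.
  by move=> p _ /eqP/negbTE ->; rewrite mul0r.
suff H d : (d <= s)%N -> G (s - d)%N = \sum_(p < s.+1) ddiff_weight s (s - d) p * F p.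
  by move=> c cs; have := H (s - c)%N (leq_subr _ _); rewrite subKn.
elim: d => [|d IH] hd.
  rewrite subn0 htop (pick s (leqnn s)); apply: eq_bigr => p _; congr (_ * _).
  have := ltn_ord p; rewrite ltnS => hp.
  by rewrite /ddiff_weight ltnNge leq_addl subr0 eqn_leq hp.
have hc : (s - d.+1 < s)%N by lia.
have e : G (s - d.+1)%N = G (s - d.+1).+1 + (F (s - d.+1)%N - F (s - (s - d.+1).+1)%N).
  by rewrite -(hstep _ hc) addrC subrK.
have e2 : ((s - d.+1).+1 = s - d)%N by lia.
rewrite e e2 IH ?(ltnW hd) // (pick (s - d.+1)%N) ?(pick (s - (s - d))%N) ?leq_subr //.
rewrite -sumrB -big_split /=; apply: eq_bigr => p _.
rewrite -mulrBl -mulrDl; congr (_ * _); rewrite /ddiff_weight.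
have -> : (s - (s - d) = d)%N by lia.
move: (val p) (ltn_ord p) => q hq.
case: (leqP (s - d.+1) q) => h1; case: (leqP (s - d) q) => h2;
case: (ltnP (q + (s - d.+1)) s) => h3; case: (ltnP (q + (s - d)) s) => h4;
case: (q =P (s - d.+1)%N) => h5; case: (q =P d) => h6 //=; lia.
Qed.

End Telescoping.

Section SumsOfBases.
Variable n : nat.
Implicit Types (Ts : seq {set 'I_n}) (S T : {set 'I_n}).

Definition cover_count Ts (k : 'I_n) : nat := count (fun T => k \in T) Ts.

Definition count_only Ts (a b : 'I_n) : nat :=
  count (fun T => (a \in T) && (b \notin T)) Ts.

Lemma cover_count_cons T Ts k : cover_count (T :: Ts) k = (k \in T) + cover_count Ts k.
Proof. by []. Qed.

Lemma cover_count_le Ts a b : cover_count Ts a <= count_only Ts a b + cover_count Ts b.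
Proof.
elim: Ts => //= T Ts; rewrite /cover_count /count_only /=.
by case: (a \in T); case: (b \in T) => /=; lia.
Qed.

Definition sum_of_bases t S (m : 'X_{1..n}) : Prop := exists Ts,
  [/\ size Ts = t, forall T, T \in Ts -> tails_le T S & forall k, m k = cover_count Ts k].

Lemma sum_of_bases_le t S m k : sum_of_bases t S m -> m k <= t.
Proof. by move=> [Ts [<- _ ->]]; apply: count_size. Qed.

Section Exchange.
Variables i j : 'I_n.
Hypothesis succ_ij : (j : nat) = i.+1.
Variable S : {set 'I_n}.
Hypotheses (notin_iS : i \notin S) (in_jS : j \in S).

Let neq_ij : i != j. Proof. by apply/eqP => e; move: succ_ij; rewrite e; lia. Qed.

Lemma mem_swap_set_count (a b : 'I_n) T :
  (a == i) && (b == j) || (a == j) && (b == i) -> a \in T -> b \notin T ->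
  forall k : 'I_n, (k \in swap_set i j T) + (k == a) = (k \in T) + (k == b).
Proof.
move=> hab aT bT k; rewrite swap_setE.
have neq_ji : j != i by rewrite eq_sym.
case/orP: hab => /andP [/eqP ea /eqP eb]; subst a b;
  case: tpermP => [->|->|/eqP ki /eqP kj];
  rewrite ?eqxx ?(negbTE neq_ij) ?(negbTE neq_ji) ?(negbTE bT) ?aT //.
all: by rewrite (negbTE ki) (negbTE kj).
Qed.

(* Swapping d sets that contain a but not b moves d units from a to b. *)
Lemma exchange_bases (a b : 'I_n) : (a == i) && (b == j) || (a == j) && (b == i) ->
  forall Ts d, (forall T, T \in Ts -> tails_le T (swap_set i j S)) ->
  d <= count_only Ts a b ->
  exists Ts', [/\ size Ts' = size Ts, forall T, T \in Ts' -> tails_le T S &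
     forall k, cover_count Ts' k + d * (k == a) = cover_count Ts k + d * (k == b)].
Proof.
move=> hab; elim=> [|T Ts IH] d hT hd.
  by exists [::]; split => // k; move: hd; rewrite leqn0 => /eqP ->.
have hTs T' : T' \in Ts -> tails_le T' (swap_set i j S).
  by move=> h; apply: hT; rewrite inE h orbT.
have hT0 : tails_le T (swap_set i j S) by apply: hT; rewrite inE eqxx.
have hT0S := tails_le_trans_swap succ_ij notin_iS in_jS hT0.
have cons_ok T0 Ts' : tails_le T0 S -> (forall T', T' \in Ts' -> tails_le T' S) ->
    forall T', T' \in T0 :: Ts' -> tails_le T' S.
  by move=> h0 h T'; rewrite inE => /orP [/eqP ->|]; [exact: h0 | exact: h].
case hP : ((a \in T) && (b \notin T)); move: hd; rewrite /count_only /= hP => hd.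
  case: d hd => [|d] hd.
    have [Ts' [h1 h2 h3]] := IH 0 hTs (leq0n _).
    exists (T :: Ts'); split; [by rewrite /= h1 | exact: cons_ok |].
    by move=> k; rewrite !cover_count_cons -!addnA; congr (_ + _); apply: h3.
  have [Ts' [h1 h2 h3]] := IH d hTs hd.
  move/andP: hP => [aT bT].
  exists (swap_set i j T :: Ts'); split; [by rewrite /= h1 | apply: cons_ok h2 |].
    apply: tails_le_swap_l => //.
    by case/orP: hab => /andP [/eqP ea /eqP eb]; subst a b; rewrite aT (negbTE bT).
  move=> k; have := h3 k; have := mem_swap_set_count hab aT bT k.
  rewrite !cover_count_cons !mulSn.
  move: (k \in swap_set i j T) (k \in T) (k == a) (k == b) => x y u v.
  by move: (cover_count Ts' k) (cover_count Ts k) (d * u) (d * v); clear; lia.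
have [Ts' [h1 h2 h3]] := IH d hTs hd.
exists (T :: Ts'); split; [by rewrite /= h1 | exact: cons_ok |].
by move=> k; rewrite !cover_count_cons -!addnA; congr (_ + _); apply: h3.
Qed.

Lemma sum_of_bases_exchange t (m m' : 'X_{1..n}) : sum_of_bases t (swap_set i j S) m ->
  (forall k, k != i -> k != j -> m' k = m k) -> m' i + m' j = m i + m j ->
  (m i <= m' i <= m j) || (m j <= m' i <= m i) -> sum_of_bases t S m'.
Proof.
move=> [Ts [hs hT hc]] hoff hsum hbet.
have neq_ji : j != i by rewrite eq_sym.
have conclude a b d : (a == i) && (b == j) || (a == j) && (b == i) ->
    d <= count_only Ts a b -> m' a + d = m a -> m' b = m b + d -> sum_of_bases t S m'.
  move=> hab hd ha hb; have [Ts' [h1 h2 h3]] := exchange_bases hab hT hd.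
  have neq_ab : a != b by case/orP: hab => /andP [/eqP -> /eqP ->].
  exists Ts'; split; rewrite ?h1 // => k; have := h3 k.
  have [->|ka] := eqVneq k a.
    by rewrite hc in ha; rewrite (negbTE neq_ab) muln1 muln0 addn0 -ha => /addIn ->.
  have [->|kb] := eqVneq k b; first by rewrite hc in hb; rewrite muln0 muln1 addn0 -hb => ->.
  have [ki kj] : k != i /\ k != j by case/orP: hab => /andP [/eqP <- /eqP <-].
  by rewrite hoff // hc !muln0 !addn0 => ->.
have cij := cover_count_le Ts i j; have cji := cover_count_le Ts j i.
rewrite -!hc in cij cji.
case: (leqP (m' i) (m i)) => hle.
  by apply: (conclude i j (m i - m' i)); rewrite ?eqxx //; case/orP: hbet; lia.
by apply: (conclude j i (m' i - m i)); rewrite ?eqxx ?orbT //; case/orP: hbet; lia.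
Qed.

End Exchange.
End SumsOfBases.

Section KeyInvariant.
Variables n t : nat.
Local Open Scope ring_scope.

Lemma scaled_indicatorE (T : {set 'I_n}) k : scaled_indicator t T k = (t * (k \in T))%N.
Proof. by rewrite mnmE. Qed.

Definition key_invariant (S : {set 'I_n}) (f : {mpoly int[n]}) : Prop :=
  (forall m, f@_m != 0 -> sum_of_bases t S m) /\
  (forall T, tails_le T S -> f@_(scaled_indicator t T) != 0).

Section DdiffStep.
Variables i j : 'I_n.
Hypothesis succ_ij : (j : nat) = i.+1.
Variable S : {set 'I_n}.
Hypotheses (notin_iS : i \notin S) (in_jS : j \in S).
Variables f g : {mpoly int[n]}.
Hypothesis g_ddiff : g * ('X_i - 'X_j) = 'X_i * f - msym (tperm i j) ('X_i * f).
Hypothesis f_inv : key_invariant (swap_set i j S) f.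

Let neq_ij : i != j. Proof. by apply/eqP => e; move: succ_ij; rewrite e; lia. Qed.

Lemma mcoeff_ddiff_weighted m : g@_m =
  \sum_(p < (m i + m j).+1)
    ddiff_weight (m i + m j) (m i) p * segment_coef i j f m (m i + m j) p.
Proof.
have := telescope_ddiff_weight (segment_coef_ddiff_top neq_ij g_ddiff m _)
  (fun c hc => segment_coef_ddiff_step neq_ij g_ddiff m hc) (leq_addr (m j) (m i)).
by rewrite /segment_coef addKn mnm_set2_id.
Qed.

Lemma ddiff_support m : g@_m != 0 -> sum_of_bases t S m.
Proof.
rewrite mcoeff_ddiff_weighted => /sumr_neq0_exists [p].
rewrite mulf_eq0 negb_or => /andP [/ddiff_weight_neq0 hw /f_inv.1 hp].
have := ltn_ord p; rewrite ltnS => le_ps.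
apply: (sum_of_bases_exchange succ_ij notin_iS in_jS hp).
- by move=> k ki kj; rewrite mnm_set2E (negbTE ki) (negbTE kj).
- by rewrite mnm_set2_i (mnm_set2_j neq_ij); lia.
- by rewrite mnm_set2_i (mnm_set2_j neq_ij); lia.
Qed.

(* Along the segment through t e_T only the point with i-th entry
   max(t [i in T], t [j in T]) contributes: the weight vanishes elsewhere,
   or the entries of the point exceed t. *)
Lemma ddiff_vertex T : tails_le T S -> g@_(scaled_indicator t T) != 0.
Proof.
move=> le_TS; set m := scaled_indicator t T.
have [mi mj] : m i = (t * (i \in T))%N /\ m j = (t * (j \in T))%N.
  by rewrite !scaled_indicatorE.
set T' := if (i \notin T) && (j \in T) then swap_set i j T else T.
have le_T'S : tails_le T' (swap_set i j S).
  rewrite /T'; case: ifP => [/andP []|/negbT].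
    exact: tails_le_swap2.
  exact: tails_le_swap_r.
have vertex : mnm_set2 i j m (maxn (m i) (m j)) (m i + m j - maxn (m i) (m j))
              = scaled_indicator t T'.
  apply/mnmP => k; rewrite mnm_set2E scaled_indicatorE /T' mi mj.
  have [->|ki] := eqVneq k i.
    by case hiT : (i \in T); case hjT : (j \in T);
      rewrite /= ?swap_setE ?tpermL ?hiT ?hjT ?muln0 ?muln1 //; lia.
  have [->|kj] := eqVneq k j.
    by case hiT : (i \in T); case hjT : (j \in T);
      rewrite /= ?swap_setE ?tpermR ?hiT ?hjT ?muln0 ?muln1 //; lia.
  by case: ifP; rewrite ?swap_setE ?tpermD 1?eq_sym ?scaled_indicatorE.
have le_max : (maxn (m i) (m j) <= m i + m j)%N by rewrite geq_max leq_addr leq_addl.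
rewrite mcoeff_ddiff_weighted (@sum_ord_single _ (fun p =>
  ddiff_weight (m i + m j) (m i) p * segment_coef i j f m (m i + m j) p) _ _ le_max).
  by rewrite ddiff_weight_max mul1r /segment_coef vertex; apply: f_inv.2.
move=> p le_ps ne_p; apply/eqP; rewrite mulf_eq0 orbC; apply/norP => -[/f_inv.1 hp].
have := sum_of_bases_le i hp; have := sum_of_bases_le j hp.
rewrite mnm_set2_i (mnm_set2_j neq_ij) => le_j le_i /ddiff_weight_neq0.
move: le_ps le_j ne_p; rewrite mi mj.
by case: (i \in T); case: (j \in T); rewrite /= ?muln1 ?muln0 ?maxnn ?maxn0 ?max0n; lia.
Qed.

Lemma key_invariant_ddiff : key_invariant S g.
Proof. split; [exact: ddiff_support | exact: ddiff_vertex]. Qed.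

End DdiffStep.
End KeyInvariant.

Section KeyRec.
Variables n t : nat.
Implicit Types S : {set 'I_n}.

Definition elem_sum S : nat := \sum_(x in S) (x : nat).

Lemma leq_elem_sum S (x : 'I_n) : x \in S -> x <= elem_sum S.
Proof. by move=> xS; rewrite /elem_sum (bigD1 x) //= leq_addr. Qed.

Lemma elem_sum_le S : elem_sum S <= n * n.
Proof.
have le_n : elem_sum S <= \sum_(x in S) n by apply: leq_sum => x _; apply: ltnW.
apply: leq_trans le_n _; rewrite sum_nat_const leq_mul //.
by rewrite -[X in _ <= X]card_ord max_card.
Qed.

Lemma elem_sum_swap (i j : 'I_n) S : (j : nat) = i.+1 -> i \notin S -> j \in S ->
  (elem_sum (swap_set i j S)).+1 = elem_sum S.
Proof.
move=> succ_ij hiS hjS.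
rewrite /elem_sum (bigD1 j hjS) [X in X.+1 = _](bigD1 i) /=; last by rewrite swap_setE tpermL.
rewrite (eq_bigl (fun x : 'I_n => (x \in S) && (x != j))).
  by rewrite succ_ij addSn; congr (_.+1 + _); apply: eq_bigl.
move=> x /=; rewrite swap_setE; case: tpermP => [->|->|/eqP xi /eqP xj].
- by rewrite eqxx andbF (negbTE hiS).
- by rewrite eqxx andbF (negbTE hiS).
- by rewrite xi xj.
Qed.

Lemma mnm_swap_scaled_indicator (i j : 'I_n) S :
  mnm_swap i j (scaled_indicator t S) = scaled_indicator t (swap_set i j S).
Proof. by apply/mnmP => k; rewrite /mnm_swap !mnmE swap_setE. Qed.

Lemma down_closed_no_ascent S :
  (forall a b : 'I_n, (b : nat) = a.+1 -> a \notin S -> b \notin S) -> down_closed S.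
Proof.
move=> h.
suff H d (x y : 'I_n) : (x : nat) = y + d -> x \in S -> y \in S.
  by move=> x y xS yx; apply: (H (x - y) x y) => //; lia.
elim: d x y => [|d IH] x y e xS.
  by have -> : y = x by apply: val_inj; rewrite /= e addn0.
have hz : y.+1 < n by have := ltn_ord x; lia.
have zS : Ordinal hz \in S by apply: (IH x) => //=; lia.
by apply/negPn/negP => /(h y (Ordinal hz) erefl); rewrite zS.
Qed.

Lemma key_invariant_monomial S :
  down_closed S -> key_invariant t S 'X_[scaled_indicator t S].
Proof.
move=> hS; split=> [m|T le_TS].
  rewrite mcoeffX; have [<- _|] := eqVneq (scaled_indicator t S) m; last by rewrite eqxx.
  exists (nseq t S); split; first by rewrite size_nseq.
    by move=> T; rewrite mem_nseq => /andP [_ /eqP ->]; split.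
  by move=> k; rewrite scaled_indicatorE /cover_count count_nseq mulnC.
by rewrite (tails_le_down_closed hS le_TS) mcoeffX eqxx oner_neq0.
Qed.

(* Each recursive call of [key_rec] swaps an ascent i < i+1 of S, which
   lowers [elem_sum S] by one; so the fuel [elem_sum S] suffices. *)
Lemma key_rec_invariant k S : 0 < t -> elem_sum S <= k ->
  key_invariant t S (key_rec k (scaled_indicator t S)).
Proof.
move=> t_gt0; elim: k S => [|k IH] S hk /=.
  apply/key_invariant_monomial => x y xS yx; suff -> : y = x by [].
  by apply: val_inj => /=; have := leq_elem_sum xS; lia.
case: pickP => [[a b] /= | no_asc]; last first.
  apply/key_invariant_monomial/down_closed_no_ascent => a b e aS.
  apply: contraFN (no_asc (a, b)) => bS.
  by rewrite /ascent /= e eqxx !scaled_indicatorE (negbTE aS) bS muln0 muln1.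
rewrite /ascent /= !scaled_indicatorE => /andP [/eqP succ_ab lt_ab].
have aS : a \notin S by apply: contraTN lt_ab => ->; case: (b \in S); lia.
have bS : b \in S by apply: contraTT lt_ab => /negbTE ->; lia.
have neq_ab : a != b by apply/eqP => e; move: succ_ab; rewrite e; lia.
rewrite mnm_swap_scaled_indicator.
apply: (key_invariant_ddiff succ_ab aS bS (ddiffP neq_ab _)).
by apply: IH; have := elem_sum_swap succ_ab aS bS; lia.
Qed.

End KeyRec.

Section ConvexHull.
Variables (R : realFieldType) (n : nat).
Local Open Scope ring_scope.

Lemma conv_mem (B : seq 'rV[R]_n) b : b \in B -> conv B b.
Proof.
move=> bB; have hi : (index b B < size B)%N by rewrite index_mem.
exists (fun k => (k == Ordinal hi)%:R); split; [|split].
- by move=> k; rewrite ler0n.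
- rewrite (bigD1 (Ordinal hi)) //= eqxx big1 ?addr0 // => k hk.
  by rewrite (negbTE hk).
- rewrite (bigD1 (Ordinal hi)) //= eqxx scale1r nth_index // big1 ?addr0 // => k hk.
  by rewrite (negbTE hk) scale0r.
Qed.

Lemma conv_scale_hull (A B : seq 'rV[R]_n) (c : R) y :
  (forall k : 'I_(size A), conv B (c *: nth 0 A k)) -> conv A y -> conv B (c *: y).
Proof.
move=> hA [w [w_ge0 [w_sum ->]]].
have [v hv] := fin_all_exists hA.
exists (fun l => \sum_k w k * v k l); split; [|split].
- move=> l; apply: sumr_ge0 => k _; apply: mulr_ge0 => //.
  by case: (hv k) => h _; apply: h.
- rewrite exchange_big /= -w_sum; apply: eq_bigr => k _.
  by rewrite -mulr_sumr; case: (hv k) => _ [-> _]; rewrite mulr1.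
- rewrite scaler_sumr.
  transitivity (\sum_k w k *: (c *: nth 0 A k)).
    by apply: eq_bigr => k _; rewrite !scalerA mulrC.
  transitivity (\sum_k \sum_l (w k * v k l) *: nth 0 B l).
    apply: eq_bigr => k _; case: (hv k) => _ [_ ->].
    by rewrite scaler_sumr; apply: eq_bigr => l _; rewrite scalerA.
  by rewrite exchange_big /=; apply: eq_bigr => l _; rewrite scaler_suml.
Qed.

Lemma sum_indic_vec (Ts : seq {set 'I_n}) :
  \sum_(T <- Ts) indic_vec R T = \row_j ((cover_count Ts j)%:R : R).
Proof.
apply/matrixP => a b; rewrite summxE !mxE /cover_count.
elim: Ts => [|T Ts IH]; first by rewrite big_nil.
by rewrite big_cons /= IH !mxE natrD.
Qed.

Lemma conv_mean (Ts : seq {set 'I_n}) :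
  (0 < size Ts)%N -> conv [seq indic_vec R T | T <- Ts]
    ((size Ts)%:R^-1 *: \row_j ((cover_count Ts j)%:R : R)).
Proof.
move=> Ts_gt0; exists (fun _ => (size Ts)%:R^-1); split; [|split].
- by move=> _; rewrite invr_ge0 ler0n.
- by rewrite sumr_const card_ord size_map -[_ *+ _]mulr_natr mulVf // pnatr_eq0 -lt0n.
- rewrite -scaler_sumr -sum_indic_vec; congr (_ *: _).
  rewrite -(big_mkord xpredT (fun k => nth 0 [seq indic_vec R T | T <- Ts] k)).
  by rewrite -(big_nth 0 xpredT (fun v => v)) big_map.
Qed.

End ConvexHull.

Section NewtonPolytope.
Variables (R : realFieldType) (n t : nat) (S : {set 'I_n}) (f : {mpoly int[n]}).
Hypothesis f_inv : key_invariant t S f.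
Local Open Scope ring_scope.

Let bases_hull := matroid_polytope (R := R) (schubert_bases S).

Lemma dilate_sub_newton x : dilate t%:R bases_hull x -> newton (R := R) f x.
Proof.
move=> [y hy ->]; apply: conv_scale_hull hy => k.
rewrite (nth_map set0) -?(size_map (@indic_vec R n)) //.
set T := nth set0 _ _.
have : T \in schubert_bases S by rewrite -mem_enum mem_nth // -(size_map (@indic_vec R n)).
rewrite inE => /gale_le_tails /f_inv.2 coef_T.
have -> : t%:R *: indic_vec R T = \row_j ((scaled_indicator t T j)%:R : R).
  by apply/matrixP => a b; rewrite !mxE scaled_indicatorE natrM.
by apply/conv_mem/map_f; rewrite mcoeff_msupp.
Qed.

Lemma newton_sub_dilate x : (0 < t)%N -> newton (R := R) f x -> dilate t%:R bases_hull x.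
Proof.
move=> t_gt0 hx; have tnz : (t%:R : R) != 0 by rewrite pnatr_eq0 -lt0n.
exists (t%:R^-1 *: x); last by rewrite scalerA mulfV // scale1r.
apply: conv_scale_hull hx => k.
rewrite (nth_map 0%MM) -?(size_map (fun m : 'X_{1..n} => \row_j ((m j)%:R : R))) //.
set m := nth 0%MM _ _.
have : m \in msupp f by rewrite mem_nth // -(size_map (fun m : 'X_{1..n} => \row_j ((m j)%:R : R))).
rewrite mcoeff_msupp => /f_inv.1 [Ts [size_Ts le_TsS hm]].
have -> : \row_j ((m j)%:R : R) = \row_j ((cover_count Ts j)%:R : R).
  by apply/matrixP => a b; rewrite !mxE hm.
rewrite -size_Ts -[_ *: _]scale1r; apply: conv_scale_hull (conv_mean _ _); last by rewrite size_Ts.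
move=> l; rewrite scale1r (nth_map set0) -?(size_map (@indic_vec R n)) //.
apply/conv_mem/map_f; rewrite mem_enum inE; apply/gale_le_tails/le_TsS.
by rewrite mem_nth // -(size_map (@indic_vec R n)).
Qed.

End NewtonPolytope.

Theorem lemma3p1 (R : realFieldType) (n : nat) (S : {set 'I_n}) (t : nat) :
  (0 < t)%N ->
  forall x : 'rV[R]_n,
    dilate t%:R (matroid_polytope (R := R) (schubert_bases S)) x <->
    newton (R := R) (key_poly (scaled_indicator t S)) x.
Proof.
move=> t_gt0 x.
have f_inv := key_rec_invariant t_gt0 (elem_sum_le S).
by split; [apply: dilate_sub_newton | apply: newton_sub_dilate].
Qed.
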